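(* Let $G\in\mathcal{G}^{\rm SSP}$ be a nonempty graph. Then the join $G\vee H$ belongs to $\mathcal{G}^{\rm SSP}$ whenever the graph $H$ satisfies one of the following: (a) $H\in\mathcal{G}^{\rm SSP}$; (b) the complement $H^c$ is a disjoint union of trees and unicyclic graphs whose cycles have odd length.
   Context: All graphs are finite, simple, undirected. The join $G\vee H$ is the disjoint union of $G$ and $H$ together with all edges joining a vertex of $G$ to a vertex of $H$. A unicyclic graph is a connected graph with exactly one cycle. For a graph $G$ on $\{1,\ldots,n\}$, $\mathcal{S}(G)$ is the set of real symmetric $n\times n$ matrices $A=(a_{ij})$ with $a_{ij}\neq0$ iff $\{i,j\}\in E(G)$ for $i\neq j$ (diagonal arbitrary). A real symmetric $A$ has the strong spectral property (SSP) if the only real symmetric $X$ with $A\circ X=0$, $I\circ X=0$, $AX-XA=0$ is $X=0$ ($\circ$ = entrywise product). $\mathcal{G}^{\rm SSP}$ is the set of graphs $G$ such that every matrix in $\mathcal{S}(G)$ has the SSP. *)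

From mathcomp Require Import all_boot all_order all_algebra.
From mathcomp Require Import reals.

Set Implicit Arguments.
Unset Strict Implicit.
Unset Printing Implicit Defensive.

Import Order.TTheory GRing.Theory Num.Theory.
Local Open Scope ring_scope.

Definition simple_graph (T : finType) (e : rel T) : Prop :=
  symmetric e /\ irreflexive e.

Definition in_S (R : realType) (n : nat) (e : rel 'I_n) (A : 'M[R]_n) : Prop :=
  A^T = A /\ (forall i j : 'I_n, i != j -> (A i j != 0) = e i j).

Definition hadamard (R : realType) (n : nat) (A B : 'M[R]_n) : 'M[R]_n :=
  \matrix_(i, j) (A i j * B i j).

Definition SSP (R : realType) (n : nat) (A : 'M[R]_n) : Prop :=
  A^T = A /\
  forall X : 'M[R]_n, X^T = X ->
    hadamard A X = 0 -> hadamard 1%:M X = 0 -> A *m X - X *m A = 0 ->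
    X = 0.

Definition in_GSSP (R : realType) (n : nat) (e : rel 'I_n) : Prop :=
  forall A : 'M[R]_n, in_S e A -> SSP A.

(* Join of G (on 'I_n) and H (on 'I_m), on 'I_(n + m): vertices of G come
   first (lshift), then those of H (rshift). *)
Definition join (n m : nat) (e1 : rel 'I_n) (e2 : rel 'I_m) : rel 'I_(n + m) :=
  fun i j =>
    match split i, split j with
    | inl a, inl b => e1 a b
    | inr a, inr b => e2 a b
    | _, _ => true
    end.

Definition complement (T : finType) (e : rel T) : rel T :=
  fun i j => (i != j) && ~~ e i j.

(* A cycle of the graph, given by its cyclic vertex sequence
   v_0, ..., v_{k-1} (distinct, k >= 3, consecutive ones adjacent and
   v_{k-1} adjacent to v_0). *)
Definition graph_cycle (T : finType) (e : rel T) (s : seq T) : bool :=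
  [&& uniq s, (2 < size s)%N & cycle e s].

Definition cycle_edges (T : finType) (s : seq T) : {set {set T}} :=
  [set:: [seq [set p.1; p.2] | p <- zip s (rot 1 s)]].

(* e is a disjoint union of trees and unicyclic graphs whose cycles have odd
   length: every connected component contains at most one cycle (so it is a
   tree or a unicyclic graph), and every cycle has odd length. *)
Definition trees_odd_unicyclic (T : finType) (e : rel T) : Prop :=
  (forall s, graph_cycle e s -> odd (size s)) /\
  (forall s1 s2, graph_cycle e s1 -> graph_cycle e s2 ->
     (exists x y, [/\ x \in s1, y \in s2 & connect e x y]) ->
     cycle_edges s1 = cycle_edges s2).

From mathcomp Require Import all_boot all_order all_algebra.
From mathcomp Require Import reals boolp.
From mathcomp Require Import zify ring.

(* Let X witness the failure of the SSP for A in S(G v H).  The blocks of A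
   between G and H have no zero entry, so those of X vanish, and the diagonal
   blocks X1, X2 of X commute with the corresponding blocks of A; hence X1 = 0
   since G is in G^SSP, and likewise X2 = 0 in case (a).  In case (b) the
   off-diagonal block of AX = XA reads b X2 = 0 for a nowhere-zero row b of A,
   where X2 is symmetric, zero on the diagonal and supported on H^c.  The
   equation b X2 = 0 leaves no vertex of degree one in the support graph of
   X2, so a longest path of that graph closes up into a cycle forming a whole
   component; around it the weights b_u X2_uv b_v alternate in sign, which is
   impossible on an odd cycle. *)

Set Implicit Arguments.
Unset Strict Implicit.
Unset Printing Implicit Defensive.

Import GRing.Theory Num.Theory.

Lemma ex_maxn_prop (P : nat -> Prop) k0 B :
  P k0 -> (forall k, P k -> k <= B) -> exists2 L, P L & forall k, P k -> k <= L.
Proof.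
move=> Pk0 leB.
have [L /asboolP PL maxL] := ex_maxnP
  (ex_intro (fun k => `[< P k >]) k0 (asboolT Pk0))
  (fun k Pk => leB k (asboolW Pk)).
by exists L => // k /asboolT /maxL.
Qed.

Lemma path_map_iota (T : Type) (e : rel T) (f : nat -> T) a c :
  (forall k, a <= k < a + c -> e (f k) (f k.+1)) ->
  path e (f a) (map f (iota a.+1 c)) /\
  last (f a) (map f (iota a.+1 c)) = f (a + c).
Proof.
elim: c a => [|c IH] a ef /=; first by rewrite addn0.
have [pa la] := IH a.+1 (fun k ak => ef k ltac:(lia)).
by rewrite pa la addSnnS ef //; lia.
Qed.

Lemma mem_cycle_edges (T : finType) (C : seq T) v :
  (v \in C) = [exists e in cycle_edges C, v \in e].
Proof.
set Z := zip C (rot 1 C).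
have Z1 : unzip1 Z = C by rewrite unzip1_zip ?size_rot.
have Z2 : unzip2 Z = rot 1 C by rewrite unzip2_zip ?size_rot.
apply/idP/existsP => [|[_ /andP[/[!inE] /mapP[[a b] abZ ->]]]].
  rewrite -{1}Z1 => /mapP[[a b] abZ /= ->]; exists [set a; b].
  by rewrite set21 andbT inE; apply/mapP; exists (a, b).
rewrite !inE => /orP[]/eqP->; first by rewrite -Z1; exact: (map_f fst abZ).
by rewrite -(mem_rot 1) -Z2; exact: (map_f snd abZ).
Qed.

Lemma eq_cycle_edges_mem (T : finType) (C1 C2 : seq T) :
  cycle_edges C1 = cycle_edges C2 -> C1 =i C2.
Proof. by move=> eC v; rewrite !mem_cycle_edges eC. Qed.

Lemma exists_leq_dec (P : pred nat) L :
  (exists2 k, k <= L & P k) \/ (forall k, k <= L -> ~~ P k).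
Proof.
have [/hasP[k /[!mem_iota] kL Pk] | /hasPn nP] := boolP (has P (iota 0 L.+1)).
  by left; exists k => //; lia.
by right=> k kL; apply: nP; rewrite mem_iota; lia.
Qed.

Section InjectivePaths.

Variables (T : finType) (s : rel T).

Definition upath (f : nat -> T) (L : nat) :=
  (forall k, k < L -> s (f k) (f k.+1)) /\
  (forall k1 k2, k1 <= L -> k2 <= L -> f k1 = f k2 -> k1 = k2).

Definition longest_upath (f : nat -> T) (L : nat) :=
  upath f L /\ forall g L', upath g L' -> L' <= L.

Lemma upath_size f L : upath f L -> L < #|T|.
Proof.
move=> [_ f_inj]; rewrite -[L.+1](size_iota 0) -(size_map f) cardE.
apply: uniq_leq_size => [|x _]; last by rewrite mem_enum.
rewrite map_inj_in_uniq ?iota_uniq // => k1 k2 /[!mem_iota] k1L k2L.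
apply: f_inj; lia.
Qed.

Lemma exists_longest_upath u v :
  irreflexive s -> s u v -> exists f L, longest_upath f L /\ 0 < L.
Proof.
move=> sirr suv.
have P1 : exists f, upath f 1.
  exists (fun k => if k is 0 then u else v).
  split=> [[|k] //|[|[|k1]] [|[|k2]] //= _ _ euv]; by rewrite euv sirr in suv.
have [L [f fL] maxL] := @ex_maxn_prop (fun L => exists f, upath f L) 1 #|T|
  P1 (fun L '(ex_intro f fL) => ltnW (upath_size fL)).
exists f, L; split; last exact: maxL P1.
by split=> // g L' gL'; apply: maxL; exists g.
Qed.

Lemma upath_consl f L y :
  symmetric s -> upath f L -> s (f 0) y -> (forall k, k <= L -> f k != y) ->
  upath (fun k => if k is k'.+1 then f k' else y) L.+1.
Proof.
move=> s_sym [fs f_inj] sy ny; split=> [[|k] kL /=|]; first by rewrite s_sym.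
  exact: fs.
case=> [|k1] [|k2] //= k1L k2L => [ey|ey|/f_inj-> //].
  by have := ny k2 k2L; rewrite ey eqxx.
by have := ny k1 k1L; rewrite ey eqxx.
Qed.

Lemma upath_rcons f L y :
  upath f L -> s (f L) y -> (forall k, k <= L -> f k != y) ->
  upath (fun k => if k == L.+1 then y else f k) L.+1.
Proof.
move=> [fs f_inj] sy ny; split=> [k kL|k1 k2 k1L k2L].
  have [->|kL'] := eqVneq k L; first by rewrite eqxx ltn_eqF.
  by rewrite !ifF ?fs; lia.
case: eqP => [->|k1L']; case: eqP => [->|k2L'] // ey.
- by have := ny k2 ltac:(lia); rewrite ey eqxx.
- by have := ny k1 ltac:(lia); rewrite -ey eqxx.
- apply: f_inj ey; lia.
Qed.

Lemma longest_upath_front f L y :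
  symmetric s -> longest_upath f L -> s (f 0) y -> exists2 k, k <= L & f k = y.
Proof.
move=> s_sym [fL maxL] sy.
have [[k kL /eqP]|ny] := exists_leq_dec (fun k => f k == y) L; first by exists k.
by have := maxL _ _ (upath_consl s_sym fL sy ny); lia.
Qed.

Lemma longest_upath_back f L y :
  longest_upath f L -> s (f L) y -> exists2 k, k <= L & f k = y.
Proof.
move=> [fL maxL] sy.
have [[k kL /eqP]|ny] := exists_leq_dec (fun k => f k == y) L; first by exists k.
by have := maxL _ _ (upath_rcons fL sy ny); lia.
Qed.

Lemma upath_connect F f L k :
  subrel s F -> upath f L -> k <= L -> connect F (f 0) (f k).
Proof.
move=> sF [fs _]; elim: k => [|k IHk] kL; first exact: connect0.
by apply: connect_trans (IHk (ltnW kL)) (connect1 (sF _ _ (fs k kL))).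
Qed.

Lemma upath_graph_cycle F f L a b :
  subrel s F -> upath f L -> a.+2 <= b <= L -> s (f b) (f a) ->
  graph_cycle F (map f (iota a (b - a).+1)).
Proof.
move=> sF [fs f_inj] abL sba; apply/and3P; split.
- rewrite map_inj_in_uniq ?iota_uniq // => k1 k2 /[!mem_iota] k1L k2L.
  apply: f_inj; lia.
- by rewrite size_map size_iota; lia.
have [pab lab] :=
  path_map_iota (a := a) (c := b - a) (fun k ak => sF _ _ (fs k ltac:(lia))).
by rewrite /= rcons_path pab lab subnKC ?sF //; lia.
Qed.

Lemma upath_mod_step f L k :
  upath f L -> s (f L) (f 0) -> s (f (k %% L.+1)) (f (k.+1 %% L.+1)).
Proof.
move=> [fs _] sL0; rewrite -[k.+1]addn1 -modnDml addn1.
have : k %% L.+1 < L.+1 by rewrite ltn_pmod.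
rewrite ltnS leq_eqVlt => /predU1P[->|kL]; first by rewrite modnn.
by rewrite (modn_small (m := (k %% L.+1).+1)) ?fs.
Qed.

Lemma upath_rot f L t :
  upath f L -> s (f L) (f 0) -> upath (fun k => f ((k + t) %% L.+1)) L.
Proof.
move=> fL sL0; split=> [k _|k1 k2 k1L k2L].
  by rewrite addSn; apply: upath_mod_step fL sL0.
have lt_mod k : k %% L.+1 <= L by rewrite -ltnS ltn_pmod.
move/(fL.2 _ _ (lt_mod _) (lt_mod _))/eqP; rewrite eqn_modDr !modn_small //.
by move/eqP.
Qed.

End InjectivePaths.

Section OddCycleComponent.

Variables (T : finType) (s F : rel T).
Hypotheses (s_sym : symmetric s) (s_irr : irreflexive s) (sF : subrel s F).
Hypothesis F_tou : trees_odd_unicyclic F.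
Hypothesis s_no_leaf : forall u v, s u v -> exists2 w, w != v & s u w.

(* If [f 0] were adjacent to some [f j] with [1 < j < L], the edge would close a
   cycle on [f 0 .. f j], and the second neighbour of [f L] (on the path, by
   maximality) a cycle through [f L]; these lie in one component of [F], so
   they share their vertex set, which forces [j = L]. *)
Lemma longest_upath_nbr0 f L y :
  longest_upath s f L -> s (f 0) y -> y = f 1 \/ y = f L.
Proof.
move=> fL sy; have [[fs f_inj] _] := fL.
have [j jL fjy] := longest_upath_front s_sym fL sy; subst y.
case: j jL sy => [|[|j]] jL sy; [by rewrite s_irr in sy | by left | right].
have sLL1 : s (f L) (f L.-1).
  by rewrite s_sym -{2}(ltn_predK jL) fs // prednK //; lia.
have [w wL1 sLw] := s_no_leaf sLL1.
have [i iL fiw] := longest_upath_back fL sLw; subst w.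
have iL2 : i.+2 <= L.
  have : i != L.-1 by apply: contraNneq wL1 => ->.
  have : i != L by apply: contraTneq sLw => ->; rewrite s_irr.
  lia.
have C1 := upath_graph_cycle sF fL.1 (a := 0) (b := j.+2) ltac:(lia)
  ltac:(by rewrite s_sym).
have C2 := upath_graph_cycle sF fL.1 (a := i) (b := L) ltac:(lia) sLw.
have /eq_cycle_edges_mem eC : cycle_edges (map f (iota 0 (j.+2 - 0).+1)) =
                               cycle_edges (map f (iota i (L - i).+1)).
  apply: F_tou.2 C1 C2 _; exists (f 0), (f L).
  by rewrite !map_f ?mem_iota ?(upath_connect sF fL.1) //; lia.
have /mapP[k /[!mem_iota] kj /f_inj eLk] : f L \in map f (iota 0 (j.+2 - 0).+1).
  by rewrite eC map_f // mem_iota; lia.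
by congr f; have := eLk (leqnn L) ltac:(lia); lia.
Qed.

(* The cycle traced by [p] is a whole connected component of [s]. *)
Definition cycle_component (p : nat -> T) (N : nat) :=
  [/\ forall k, p (k + N) = p k, forall k, p k != p k.+2,
      forall k, s (p k) (p k.+1) &
      forall k w, s (p k.+1) w -> w = p k \/ w = p k.+2].

Lemma exists_odd_cycle_component u v :
  s u v -> exists N p, odd N /\ cycle_component p N.
Proof.
move=> suv; have [f [L [fL L_gt0]]] := exists_longest_upath s_irr suv.
have [y y1 s0y] := s_no_leaf (fL.1.1 0 L_gt0).
have [ey|ey] := longest_upath_nbr0 fL s0y; first by rewrite ey eqxx in y1.
subst y; have sL0 : s (f L) (f 0) by rewrite s_sym.
have L_gt1 : 1 < L.
  by rewrite ltn_neqAle L_gt0 andbT; apply: contraNneq y1 => <-.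
have lt_mod k : k %% L.+1 <= L by rewrite -ltnS ltn_pmod.
exists L.+1, (fun k => f (k %% L.+1)); split; last split.
- have := F_tou.1 _ (upath_graph_cycle sF fL.1 (a := 0) (b := L) ltac:(lia) sL0).
  by rewrite size_map size_iota subn0.
- by move=> k; rewrite modnDr.
- move=> k; apply/eqP => /(fL.1.2 _ _ (lt_mod _) (lt_mod _))/eqP.
  by rewrite -addn2 -{1}[k]addn0 eqn_modDl mod0n modn_small.
- by move=> k; apply: upath_mod_step fL.1 sL0.
move=> k w; have rot_k : longest_upath s (fun i => f ((i + k.+1) %% L.+1)) L.
  by split; [exact: upath_rot fL.1 sL0 | exact: fL.2].
move/(longest_upath_nbr0 rot_k) => /=; rewrite add1n addnS -addSn modnDl.
by case=> ->; [right | left].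
Qed.

End OddCycleComponent.

Local Open Scope ring_scope.

Lemma odd_antiperiodic_eq0 (R : numDomainType) (c : nat -> R) N :
  (forall k, c k.+1 = - c k) -> odd N -> c N = c 0 -> c 0 = 0.
Proof.
move=> cS oddN; have cE k : c k = (-1) ^+ k * c 0.
  by elim: k => [|k IHk]; rewrite ?expr0 ?mul1r // cS IHk exprS mulN1r mulNr.
rewrite cE -signr_odd oddN expr1 mulN1r => /eqP.
by rewrite eq_sym -addr_eq0 -mulr2n mulrn_eq0 => /eqP.
Qed.

Lemma kernel_no_odd_cycle_component (R : numDomainType) m (Y : 'M[R]_m)
    (b : 'rV[R]_m) p N :
  Y^T = Y -> (forall j, b 0 j != 0) -> b *m Y = 0 -> odd N ->
  ~ cycle_component [rel i j | Y i j != 0] p N.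
Proof.
move=> YT b_nz bY0 oddN [pN p2 Yp Ynbr].
have Ysym i j : Y i j = Y j i by rewrite -[in LHS]YT mxE.
have bY0j j : \sum_i b 0 i * Y i j = 0.
  by have /matrixP/(_ 0 j) := bY0; rewrite !mxE.
have two_terms k :
    b 0 (p k) * Y (p k) (p k.+1) + b 0 (p k.+2) * Y (p k.+2) (p k.+1) = 0.
  rewrite -(bY0j (p k.+1)) (bigD1 (p k)) // (bigD1 (p k.+2)) /= 1?eq_sym //.
  rewrite addrA big1 ?addr0 //.
  move=> i /andP[ik ik2]; have [->|/negPf-nz] := eqVneq (Y i (p k.+1)) 0.
    by rewrite mulr0.
  have /(Ynbr k)[ei|ei] : Y (p k.+1) i != 0 by rewrite Ysym nz.
    by rewrite ei eqxx in ik.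
  by rewrite ei eqxx in ik2.
pose c k := b 0 (p k) * Y (p k) (p k.+1) * b 0 (p k.+1).
have: c 0 = 0.
  apply: (odd_antiperiodic_eq0 (N := N)) => // [k|]; last first.
    by rewrite /c -[N]add0n pN -addSn pN.
  apply/eqP; rewrite -addr_eq0 -(mul0r (b 0 (p k.+1))) -(two_terms k) /c Ysym.
  apply/eqP; ring.
by move/eqP; rewrite /c !mulf_eq0 !(negbTE (b_nz _)) (negbTE (Yp 0)).
Qed.

Lemma trees_odd_unicyclic_kernel_eq0 (R : numDomainType) m (F : rel 'I_m)
    (Y : 'M[R]_m) (b : 'rV[R]_m) :
  trees_odd_unicyclic F -> Y^T = Y -> (forall i, Y i i = 0) ->
  (forall i j, Y i j != 0 -> F i j) -> (forall j, b 0 j != 0) -> b *m Y = 0 ->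
  Y = 0.
Proof.
move=> F_tou YT Y_diag YF b_nz bY0.
have Ysym i j : Y i j = Y j i by rewrite -[in LHS]YT mxE.
have bY0j j : \sum_i b 0 i * Y i j = 0.
  by have /matrixP/(_ 0 j) := bY0; rewrite !mxE.
pose s := [rel i j | Y i j != 0].
have s_sym : symmetric s by move=> i j; rewrite /= Ysym.
have s_irr : irreflexive s by move=> i; rewrite /= Y_diag eqxx.
have s_no_leaf u v : s u v -> exists2 w, w != v & s u w.
  move=> suv; have [w /andP[wv suw]|none] := pickP [pred w | (w != v) && s u w].
    by exists w.
  have := bY0j u; rewrite (bigD1 v) //= big1 ?addr0.
    by move/eqP; rewrite mulf_eq0 (negbTE (b_nz v)) Ysym (negbTE suv).
  move=> w wv; have := none w; rewrite /= wv Ysym => /negbFE/eqP->.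
  exact: mulr0.
apply/matrixP => u v; rewrite mxE; apply/eqP; apply: contraT => suv.
have [N [p [oddN pC]]] :=
  exists_odd_cycle_component s_sym s_irr YF F_tou s_no_leaf suv.
by case: (kernel_no_odd_cycle_component YT b_nz bY0 oddN pC).
Qed.

Definition SSP_admissible (R : realType) n (A X : 'M[R]_n) :=
  [/\ X^T = X, forall i j, A i j * X i j = 0 & forall i, X i i = 0].

Lemma SSPP (R : realType) n (A : 'M[R]_n) :
  SSP A <-> A^T = A /\ forall X, SSP_admissible A X -> A *m X = X *m A -> X = 0.
Proof.
have hadamard_eq0 B X : hadamard B X = 0 <-> forall i j, B i j * X i j = 0.
  split=> [BX i j | BX]; last by apply/matrixP => i j; rewrite !mxE BX.
  by have /matrixP/(_ i j) := BX; rewrite !mxE.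
have diag_eq0 X : hadamard 1%:M X = 0 <-> forall i, X i i = 0.
  rewrite hadamard_eq0; split=> [X0 i | X0 i j].
    by have := X0 i i; rewrite mxE eqxx mul1r.
  by rewrite mxE; case: eqVneq => [->|_]; rewrite ?X0 ?mulr0 ?mul0r.
split=> [[AT ssp] | [AT ssp]]; split=> // X.
  move=> [XT /hadamard_eq0 AX /diag_eq0 X_diag] AXXA.
  by apply: ssp => //; rewrite AXXA subrr.
move=> XT /hadamard_eq0 AX /diag_eq0 X_diag /eqP; rewrite subr_eq0 => /eqP AXXA.
exact: ssp.
Qed.

Lemma SSP_admissible_ulsub (R : realType) n m (A X : 'M[R]_(n + m)) :
  SSP_admissible A X -> SSP_admissible (ulsubmx A) (ulsubmx X).
Proof.
by move=> [XT AX X_diag]; split=> [|i j|i]; rewrite ?trmx_ulsub ?XT // !mxE.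
Qed.

Lemma SSP_admissible_drsub (R : realType) n m (A X : 'M[R]_(n + m)) :
  SSP_admissible A X -> SSP_admissible (drsubmx A) (drsubmx X).
Proof.
by move=> [XT AX X_diag]; split=> [|i j|i]; rewrite ?trmx_drsub ?XT // !mxE.
Qed.

Lemma SSP_admissible_support (R : realType) n (e : rel 'I_n) (A X : 'M[R]_n)
    i j :
  in_S e A -> SSP_admissible A X -> X i j != 0 -> complement e i j.
Proof.
move=> [_ Ae] [_ AX X_diag] Xij.
have ij : i != j by apply: contraNneq Xij => ->; rewrite X_diag.
rewrite /complement ij -Ae // negbK.
by have /eqP := AX i j; rewrite mulf_eq0 (negbTE Xij) orbF.
Qed.

Section Join.

Variables (n m : nat) (eG : rel 'I_n) (eH : rel 'I_m).

Lemma join_lshift i j : join eG eH (lshift m i) (lshift m j) = eG i j.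
Proof. by rewrite /join (unsplitK (inl i)) (unsplitK (inl j)). Qed.

Lemma join_rshift i j : join eG eH (rshift n i) (rshift n j) = eH i j.
Proof. by rewrite /join (unsplitK (inr i)) (unsplitK (inr j)). Qed.

Lemma join_lrshift i j : join eG eH (lshift m i) (rshift n j).
Proof. by rewrite /join (unsplitK (inl i)) (unsplitK (inr j)). Qed.

Variables (R : realType) (A : 'M[R]_(n + m)).
Hypothesis SA : in_S (join eG eH) A.

Lemma in_S_join_ulsub : in_S eG (ulsubmx A).
Proof.
have [AT Ae] := SA; split=> [|i j ij]; first by rewrite trmx_ulsub AT.
by rewrite !mxE Ae ?eq_lshift // join_lshift.
Qed.

Lemma in_S_join_drsub : in_S eH (drsubmx A).
Proof.
have [AT Ae] := SA; split=> [|i j ij]; first by rewrite trmx_drsub AT.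
by rewrite !mxE Ae ?eq_rshift // join_rshift.
Qed.

Lemma in_S_join_ursub i j : ursubmx A i j != 0.
Proof. by have [_ Ae] := SA; rewrite !mxE Ae ?eq_lrshift // join_lrshift. Qed.

Lemma join_commutant_blocks X :
  SSP_admissible A X -> A *m X = X *m A ->
  [/\ X = block_mx (ulsubmx X) 0 0 (drsubmx X),
      ulsubmx A *m ulsubmx X = ulsubmx X *m ulsubmx A,
      drsubmx A *m drsubmx X = drsubmx X *m drsubmx A &
      ursubmx A *m drsubmx X = ulsubmx X *m ursubmx A].
Proof.
move=> [XT AX _] AXXA.
have X_ur : ursubmx X = 0.
  apply/matrixP => i j; have := in_S_join_ursub i j; rewrite !mxE => Anz.
  have /eqP := AX (lshift m i) (rshift n j).
  by rewrite mulf_eq0 (negbTE Anz) => /eqP.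
have X_dl : dlsubmx X = 0 by rewrite -XT -trmx_ursub X_ur trmx0.
have defX : X = block_mx (ulsubmx X) 0 0 (drsubmx X).
  by rewrite -X_ur -X_dl submxK.
rewrite -[A]submxK defX !mulmx_block in AXXA.
move/eq_block_mx: AXXA; rewrite !(mulmx0, mul0mx, addr0, add0r) => -[ul ur _ dr].
by split.
Qed.

End Join.

Theorem corollary5p2 (R : realType) (n m : nat)
    (eG : rel 'I_n) (eH : rel 'I_m) :
  simple_graph eG -> simple_graph eH ->
  (0 < n)%N -> in_GSSP R eG ->
  (in_GSSP R eH \/ trees_odd_unicyclic (complement eH)) ->
  in_GSSP R (join eG eH).
Proof.
move=> _ _ n_gt0 G_SSP H_cases A SA; have [AT _] := SA.
apply/SSPP; split=> // X admX AXXA.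
have [defX comm_ul comm_dr comm_ur] := join_commutant_blocks SA admX AXXA.
have ulX_eq0 : ulsubmx X = 0.
  have [_ G_ssp] := (SSPP _).1 (G_SSP _ (in_S_join_ulsub SA)).
  exact: G_ssp (SSP_admissible_ulsub admX) comm_ul.
have drX_eq0 : drsubmx X = 0.
  have admX2 := SSP_admissible_drsub admX; have [X2T _ X2_diag] := admX2.
  case: H_cases => [H_SSP | H_tou].
    have [_ H_ssp] := (SSPP _).1 (H_SSP _ (in_S_join_drsub SA)).
    exact: H_ssp admX2 comm_dr.
  apply: (trees_odd_unicyclic_kernel_eq0 (b := row (Ordinal n_gt0) (ursubmx A)))
    H_tou X2T X2_diag _ _ _.
  - by move=> i j; apply: SSP_admissible_support (in_S_join_drsub SA) admX2.
  - by move=> j; rewrite mxE (in_S_join_ursub SA).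
  - by rewrite -row_mul comm_ur ulX_eq0 mul0mx row0.
by rewrite defX ulX_eq0 drX_eq0 block_mx0.
Qed.
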